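(* Let $\hat f$ be an estimator built from $Z_n$, and let $A$ be an attack with $x\in A(x)$ for all $x$. Assume $\mathbb E Y^2<\infty$ and the quantities below are finite. Define $T(\hat f)=\mathbb E\big[(\hat f(X)-Y)^2+\sup_{X'\in A(X)}(\hat f(X')-\hat f(X))^2\big]$ and $R_{A,2}(\hat f,f)=\mathbb E\sup_{X'\in A(X)}|\hat f(X')-f(X)|^2$, where expectations are over $Z_n$ and an independent test pair $(X,Y)$. Then $$\frac{T(\hat f)-\mathbb E|f(X)-Y|^2}{5}\le R_{A,2}(\hat f,f)\le2\big[T(\hat f)-\mathbb E|f(X)-Y|^2\big].$$
   Context: $(X,Y)$ is a random pair in $\mathbb R^d\times\mathbb R$, $Z_n$ is an i.i.d. sample of copies of $(X,Y)$ independent of $(X,Y)$, $f(x)=\mathbb E(Y\mid X=x)$, and an attack is a map $A$ assigning to each $x$ in the support $\Omega$ of $X$ a measurable set $A(x)\subseteq\Omega$. $T(\hat f)$ is the TRADES objective with squared loss and balancing parameter $1$. *)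

From HB Require Import structures.
From mathcomp Require Import all_boot all_order all_algebra.
From mathcomp Require Import all_classical all_reals all_analysis.
From mathcomp Require Import measurable_realfun.

Set Implicit Arguments.
Unset Strict Implicit.
Unset Printing Implicit Defensive.

Import Order.TTheory GRing.Theory Num.Theory.
Local Open Scope classical_set_scope.
Local Open Scope ring_scope.

(* R^d is modelled as [d.-tuple R], equipped by the library with the product
   (= Borel) sigma-algebra generated by the coordinate projections. *)

Section defs.
Context {R : realType}.

(* [f] is (a version of) the regression function x |-> E(Y | X = x):
   a measurable function with f(X) integrable such that
   E[Y 1_{X in B}] = E[f(X) 1_{X in B}] for every measurable B.
   (Conditional expectation requires Y integrable, which is also recorded.) *)
Definition regression_function {dT dV} {T : measurableType dT}
    {V : measurableType dV} (P : probability T R) (X : T -> V) (Y : T -> R)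
    (f : V -> R) : Prop :=
  [/\ measurable_fun setT f,
      P.-integrable setT (EFin \o Y),
      P.-integrable setT (EFin \o (f \o X)) &
      forall B : set V, measurable B ->
        (\int[P]_(t in X @^-1` B) (Y t)%:E =
         \int[P]_(t in X @^-1` B) (f (X t))%:E)%E].

(* Z = (Z_1, ..., Z_n) is an i.i.d. sample of copies of (X, Y): its joint law
   is the n-fold product of the law of (X, Y) (checked on measurable boxes,
   which generate the product sigma-algebra). *)
Definition iid_sample_of {dT dS dV} {T : measurableType dT}
    {S : measurableType dS} {V : measurableType dV}
    (P : probability T R) (X : T -> V) (Y : T -> R)
    (n : nat) (Q : probability S R) (Z : S -> n.-tuple (V * R)%type) : Prop :=
  measurable_fun setT Z /\
  forall B : 'I_n -> set (V * R)%type, (forall i, measurable (B i)) ->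
    Q [set s | forall i, B i (tnth (Z s) i)] =
    (\prod_(i < n) P ((fun t => (X t, Y t)) @^-1` B i))%E.

Definition sup_dev {V : Type} (h : V -> R) (A : V -> set V) (x : V) : \bar R :=
  ereal_sup [set ((h x' - h x) ^+ 2)%:E | x' in A x].

Definition sup_err {V : Type} (h f : V -> R) (A : V -> set V) (x : V) : \bar R :=
  ereal_sup [set (`|h x' - f x| ^+ 2)%:E | x' in A x].

End defs.

From HB Require Import structures.
From mathcomp Require Import all_boot all_order all_algebra.
From mathcomp Require Import all_classical all_reals all_analysis.
From mathcomp Require Import measurable_realfun.
From mathcomp Require Import lra ring.

Set Implicit Arguments.
Unset Strict Implicit.
Unset Printing Implicit Defensive.

Import Order.TTheory GRing.Theory Num.Theory.
Import HBSimple HBNNSimple.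
Local Open Scope classical_set_scope.
Local Open Scope ring_scope.

(* Since f(X) - Y is orthogonal in L^2 to every function of X (the definition of
   the regression function gives this against indicators, simple-function
   approximation extends it to all psi(X), and truncating f shows
   E f(X)^2 <= E Y^2), the cross term of the bias-variance expansion vanishes and
     T(fhat) - E|f(X) - Y|^2 = E sup_{X' in A(X)} (fhat X' - fhat X)^2
                              + E (fhat X - f X)^2.
   Both bounds then hold pointwise.  With a = fhat x' - f x, b = fhat x - f x:
   a^2 <= 2 (a - b)^2 + 2 b^2 gives the upper bound, while
   (a - b)^2 <= 2 a^2 + 2 b^2 <= 4 sup a^2 and b^2 <= sup a^2 (as x is in A(x))
   give the lower one with constant 5. *)

Section orthogonal_to_indicators.
Local Open Scope ereal_scope.
Context {R : realType} {dT dV : measure_display} {T : measurableType dT}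
  {V : measurableType dV}.
Variables (P : {measure set T -> \bar R}) (X : T -> V) (W : T -> R).
Hypotheses (mX : measurable_fun setT X) (iW : P.-integrable setT (EFin \o W)).
Hypothesis W_perp_indic :
  forall B, measurable B -> \int[P]_t ((\1_B (X t) * W t)%:E) = 0.

Let mW : measurable_fun setT W.
Proof. by apply/measurable_EFinP; exact: measurable_int iW. Qed.

Lemma integrable_indic_compM (B : set V) : measurable B ->
  P.-integrable setT (fun t => (\1_B (X t) * W t)%:E).
Proof.
move=> mB; apply: (integrableMr measurableT _ _ iW).
  by apply: measurableT_comp => //; exact: measurable_indic.
exists 1%R; split => // x x1 t _ /=; rewrite indicE.
by case: (X t \in B); rewrite ?normr1 ?normr0 ltW // (le_lt_trans _ x1).
Qed.

Lemma integral_sfun_compM_eq0 (phi : {sfun V >-> R}) :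
  \int[P]_t ((phi (X t) * W t)%:E) = 0.
Proof.
under eq_integral => t _ do rewrite (fimfunEord phi (X t)) mulr_suml -sumEFin.
have mphi i : measurable (phi @^-1` [set i]) by exact: measurable_funPTI.
rewrite integral_sum //; last first.
  move=> i; under eq_fun => t do rewrite -mulrA EFinM.
  exact/integrableZl/integrable_indic_compM.
apply: big1 => i _; under eq_integral => t _ do rewrite -mulrA EFinM.
by rewrite integralZl ?W_perp_indic ?mule0 //; exact: integrable_indic_compM.
Qed.

Lemma integral_ge0_compM_eq0 (psi : V -> R) : measurable_fun setT psi ->
  (forall v, 0 <= psi v)%R ->
  P.-integrable setT (fun t => (psi (X t) * W t)%:E) ->
  \int[P]_t ((psi (X t) * W t)%:E) = 0.
Proof.
move=> mpsi psi0 ipsi.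
have mE : measurable_fun setT (EFin \o psi) by exact/measurable_EFinP.
pose g := nnsfun_approx measurableT mE.
have gle n v : (0 <= g n v <= psi v)%R.
  apply/andP; split => //; rewrite -lee_fin /g nnsfun_approxE.
  by apply: le_approx => // x _; rewrite lee_fin.
have : \int[P]_t (g n (X t) * W t)%:E @[n --> \oo] -->
       \int[P]_t (psi (X t) * W t)%:E.
  apply: (@dominated_cvg _ _ _ P setT measurableT _ _
    (fun t => `|(psi (X t) * W t)%:E|)) => //.
  - move=> n; apply/measurable_EFinP.
    by apply: measurable_funM => //; exact: measurableT_comp.
  - move=> t _; under eq_fun => n do rewrite EFinM.
    rewrite EFinM; apply: cvgeZr => //.
    by apply: cvg_nnsfun_approx => // x _; rewrite lee_fin.
  - exact: integrable_abse.
  - move=> n t _; rewrite !abse_EFin lee_fin !normrM ler_wpM2r //.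
    by have /andP[g0 gpsi] := gle n (X t); rewrite !ger0_norm // (le_trans g0).
under eq_fun => n do rewrite integral_sfun_compM_eq0.
by move/cvg_lim => <- //; exact: lim_cst.
Qed.

Lemma integral_compM_eq0 (psi : V -> R) : measurable_fun setT psi ->
  P.-integrable setT (fun t => (psi (X t) * W t)%:E) ->
  \int[P]_t ((psi (X t) * W t)%:E) = 0.
Proof.
move=> mpsi ipsi.
have part_integrable (phi : V -> R) : measurable_fun setT phi ->
    (forall v, `|phi v| <= `|psi v|)%R ->
    P.-integrable setT (fun t => (phi (X t) * W t)%:E).
  move=> mphi phi_psi; apply: le_integrable ipsi => //.
    by apply/measurable_EFinP/measurable_funM => //; exact: measurableT_comp.
  by move=> t _; rewrite !abse_EFin lee_fin !normrM ler_wpM2r.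
have le_psi v : (`|psi^\+ v| <= `|psi v| /\ `|psi^\- v| <= `|psi v|)%R.
  have := congr1 (fun h => h v) (funrposDneg psi) => /= <-.
  rewrite !ger0_norm ?funrpos_ge0 ?funrneg_ge0 //.
  by rewrite lerDl funrneg_ge0 lerDr funrpos_ge0.
have mpos := measurable_funrpos mpsi; have mneg := measurable_funrneg mpsi.
transitivity (\int[P]_t ((psi^\+ (X t) * W t)%:E - (psi^\- (X t) * W t)%:E)).
  apply: eq_integral => t _; rewrite -EFinB -mulrBl.
  by congr (_ * _)%:E; rewrite -[in LHS](funrposBneg psi) fctE.
rewrite integralB ?integral_ge0_compM_eq0 ?subee //.
all: try by move=> v; rewrite ?funrpos_ge0 ?funrneg_ge0.
all: by apply: part_integrable => // v; case: (le_psi v).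
Qed.
End orthogonal_to_indicators.

Section regression_residual.
Local Open Scope ereal_scope.
Context {R : realType} {dT dV : measure_display} {T : measurableType dT}
  {V : measurableType dV}.
Variables (P : probability T R) (X : T -> V) (Y : T -> R) (f : V -> R).
Hypotheses (mX : measurable_fun setT X) (freg : regression_function P X Y f).

Let mf : measurable_fun setT f. Proof. by case: freg. Qed.
Let iY : P.-integrable setT (EFin \o Y). Proof. by case: freg. Qed.
Let ifX : P.-integrable setT (EFin \o (f \o X)). Proof. by case: freg. Qed.

Lemma integrable_residual :
  P.-integrable setT (EFin \o (fun t => Y t - f (X t))%R).
Proof. exact: (integrableB measurableT iY ifX). Qed.

Lemma integral_indic_residual B : measurable B ->
  \int[P]_t ((\1_B (X t) * (Y t - f (X t)))%:E) = 0.
Proof.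
move=> mB; have mXB : measurable (X @^-1` B) by rewrite -[_ @^-1` _]setTI; exact: mX.
have iS g : P.-integrable setT (EFin \o g) -> P.-integrable (X @^-1` B) (EFin \o g).
  exact: integrableS.
transitivity (\int[P]_(t in X @^-1` B) (Y t - f (X t))%:E).
  rewrite [RHS]integral_mkcond; apply: eq_integral => t _; rewrite patchE indicE.
  rewrite (_ : (t \in X @^-1` B) = (X t \in B)) //.
  by case: (X t \in B); rewrite ?mul1r ?mul0r.
under eq_integral => t _ do rewrite EFinB.
rewrite integralB //; try exact: iS.
have [_ _ _ ->] := freg => //.
by rewrite subee // integrable_fin_num //; exact: iS.
Qed.

Lemma integral_compM_residual (psi : V -> R) : measurable_fun setT psi ->
  P.-integrable setT (fun t => (psi (X t) * (Y t - f (X t)))%:E) ->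
  \int[P]_t ((psi (X t) * (Y t - f (X t)))%:E) = 0.
Proof.
exact: (@integral_compM_eq0 _ _ _ _ _ P X (fun t => Y t - f (X t))%R mX
  integrable_residual integral_indic_residual).
Qed.

Hypothesis iY2 : P.-integrable setT (fun t => (Y t ^+ 2)%:E).

Let level k := [set v | `|f v| <= k%:R]%R.
Let trunc k v := (f v * \1_(level k) v)%R.
Let trunc_sq k v := (f v ^+ 2 * \1_(level k) v)%R.

Let measurable_level k : measurable (level k).
Proof.
by rewrite -[level k]setTI; apply: measurable_fun_le => //; exact: measurableT_comp.
Qed.

Let trunc_sqE k v : (trunc k v ^+ 2 = trunc_sq k v)%R.
Proof.
rewrite /trunc /trunc_sq indicE.
by case: (v \in level k); rewrite /= ?mulr1 ?mulr0 ?expr0n.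
Qed.

Let truncMf k v : (trunc k v * f v = trunc_sq k v)%R.
Proof. by rewrite /trunc /trunc_sq mulrAC expr2. Qed.

Let measurable_trunc k : measurable_fun setT (trunc k).
Proof. by apply: measurable_funM => //; apply/measurable_indic/measurable_level. Qed.

Let integrable_truncM k (g : T -> R) : P.-integrable setT (EFin \o g) ->
  P.-integrable setT (fun t => (trunc k (X t) * g t)%:E).
Proof.
move=> ig; apply: (integrableMr measurableT _ _ ig).
  exact: measurableT_comp.
exists k%:R; split; first exact: num_real.
move=> x kx t _; apply/ltW/(le_lt_trans _ kx).
rewrite /trunc indicE; case: (boolP (X t \in level k)) => [/set_mem //|_].
  by rewrite mulr1.
by rewrite mulr0 normr0.
Qed.

Let integrable_trunc_sq k : P.-integrable setT (fun t => (trunc_sq k (X t))%:E).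
Proof.
apply: (eq_integrable measurableT _ _ _ (integrable_truncM k ifX)) => t _.
by rewrite /= truncMf.
Qed.

(* Orthogonality of the residual gives E[trunc^2] = E[trunc * Y], which is at most
   E[trunc^2]/2 + E[Y^2]/2. *)
Lemma integral_trunc_sq_le k :
  \int[P]_t (trunc_sq k (X t))%:E <= \int[P]_t (Y t ^+ 2)%:E.
Proof.
have truncY : \int[P]_t (trunc k (X t) * Y t)%:E =
               \int[P]_t (trunc_sq k (X t))%:E.
  have := integral_compM_residual (measurable_trunc k)
    (integrable_truncM k integrable_residual).
  under eq_integral => t _ do rewrite mulrBr EFinB truncMf.
  rewrite integralB //; try exact: integrable_truncM.
  move/eqP; rewrite sube_eq ?add0e; first by move/eqP.
    exact: integrable_fin_num (integrable_truncM k iY).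
  by rewrite fin_num_adde_defl // integrable_fin_num // integrable_trunc_sq.
have am_gm t : (trunc k (X t) * Y t <= 2^-1 * (trunc_sq k (X t) + Y t ^+ 2))%R.
  rewrite -trunc_sqE; have := sqr_ge0 (trunc k (X t) - Y t).
  by rewrite sqrrB; lra.
have : \int[P]_t (trunc_sq k (X t))%:E <=
       (2^-1)%:E * (\int[P]_t (trunc_sq k (X t))%:E + \int[P]_t (Y t ^+ 2)%:E).
  rewrite -{1}truncY -integralD // -integralZl //; last exact: integrableD.
  apply: le_integral => //.
  - exact: integrable_truncM.
  - exact/integrableZl/integrableD.
  - by move=> t _; rewrite -EFinD -EFinM lee_fin am_gm.
rewrite -(fineK (integrable_fin_num measurableT (integrable_trunc_sq k))).
rewrite -(fineK (integrable_fin_num measurableT iY2)).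
by rewrite -EFinD -EFinM !lee_fin; lra.
Qed.

Lemma integrable_regression_sq : P.-integrable setT (fun t => (f (X t) ^+ 2)%:E).
Proof.
have trunc_sq_ge0 k t : (0 <= trunc_sq k (X t))%R.
  by rewrite mulr_ge0 ?sqr_ge0 // indicE ler0n.
have mtrunc_sq k : measurable_fun setT (fun t => (trunc_sq k (X t))%:E).
  exact: measurable_int (integrable_trunc_sq k).
have nd_trunc_sq t : nondecreasing_seq (fun k => (trunc_sq k (X t))%:E).
  move=> m n mn; rewrite lee_fin /trunc_sq ler_wpM2l ?sqr_ge0 // !indicE.
  have [/set_mem fm|//] := boolP (X t \in level m).
  by rewrite mem_set //; apply: le_trans fm _; rewrite ler_nat.
have lim_trunc_sq t : limn (fun k => (trunc_sq k (X t))%:E) = (f (X t) ^+ 2)%:E.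
  apply: cvg_lim => //; apply: cvg_near_cst.
  exists (Num.truncn `|f (X t)|).+1 => // k /= hk.
  rewrite /trunc_sq indicE mem_set ?mulr1 //.
  by apply/ltW/(lt_le_trans (truncnS_gt _)); rewrite ler_nat.
apply/integrableP; split.
  by apply/measurable_EFinP/measurable_funX; exact: measurableT_comp.
under eq_integral => t _ do rewrite gee0_abs ?lee_fin ?sqr_ge0 // -lim_trunc_sq.
rewrite (monotone_convergence P measurableT mtrunc_sq (fun k t _ => trunc_sq_ge0 k t)
  (fun t _ => nd_trunc_sq t)).
apply: (le_lt_trans (y := \int[P]_t (Y t ^+ 2)%:E)); last exact: integrable_lty.
apply: lime_le.
  apply: ereal_nondecreasing_is_cvgn => m n mn.
  by apply: ge0_le_integral => // t _; rewrite ?lee_fin //; exact: nd_trunc_sq.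
by apply: nearW; exact: integral_trunc_sq_le.
Qed.
End regression_residual.

Section product_with_probability.
Local Open Scope ereal_scope.
Context {R : realType} {dS dT : measure_display} {S : measurableType dS}
  {T : measurableType dT}.
Variables (Q : probability S R) (P : probability T R).

Lemma integral_prod_snd (phi : T -> \bar R) : measurable_fun setT phi ->
  (forall t, 0 <= phi t) -> \int[Q \x P]_p phi p.2 = \int[P]_t phi t.
Proof.
move=> mphi phi0; rewrite fubini_tonelli1 //; last exact: measurableT_comp.
have := @integral_cst _ _ _ Q setT measurableT (\int[P]_t phi t).
by rewrite /cst => ->; rewrite [X in _ * X]probability_setT mule1.
Qed.

Lemma integrable_prod_snd (phi : T -> \bar R) : P.-integrable setT phi ->
  (Q \x P).-integrable setT (fun p => phi p.2).
Proof.
move=> /integrableP[mphi iphi]; apply/integrableP; split.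
  exact: measurableT_comp.
rewrite (integral_prod_snd (phi := fun t => `|phi t|)) //.
exact: measurableT_comp.
Qed.

Lemma ae_prod_snd (Pr : T -> Prop) :
  {ae P, forall t, Pr t} -> {ae Q \x P, forall p, Pr p.2}.
Proof.
case=> N [mN PN NPr]; exists (setT `*` N); split.
- exact: measurableX.
- by rewrite product_measure1E // [X in _ * X]PN mule0.
- by move=> [s t] /= nPr; split => //; apply: NPr.
Qed.
End product_with_probability.

Lemma sqrrD_le (R : realDomainType) (a b : R) :
  (a + b) ^+ 2 <= 2 * a ^+ 2 + 2 * b ^+ 2.
Proof.
rewrite -subr_ge0 (_ : _ - _ = (a - b) ^+ 2); first exact: sqr_ge0.
by ring.
Qed.

Section sup_bounds.
Local Open Scope ereal_scope.
Context {R : realType} {V : Type}.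
Variables (h f : V -> R) (A : V -> set V) (x : V).

Lemma sup_err_le_dev_bias : maxe (sup_err h f A x) 0 <=
  2%:E * maxe (sup_dev h A x) 0 + 2%:E * ((h x - f x) ^+ 2)%:E.
Proof.
have dev0 : 0 <= maxe (sup_dev h A x) 0 by rewrite le_max lexx orbT.
rewrite ge_max adde_ge0 ?mule_ge0 ?lee_fin ?sqr_ge0 // andbT.
apply: ge_ereal_sup => _ [x' Ax' <-].
apply: (@le_trans _ _ (2%:E * ((h x' - h x) ^+ 2)%:E + 2%:E * ((h x - f x) ^+ 2)%:E)).
  rewrite -!EFinM -EFinD lee_fin real_normK ?num_real //.
  by rewrite (_ : h x' - f x = h x' - h x + (h x - f x))%R ?sqrrD_le //; ring.
apply/leeD2r/lee_wpmul2l => //.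
by rewrite le_max ereal_sup_ubound //; exists x'.
Qed.

Lemma sup_dev_le_err : A x x -> sup_dev h A x <= 4%:E * sup_err h f A x.
Proof.
move=> Axx; apply: ge_ereal_sup => _ [x' Ax' <-].
have err_ub y : A x y -> (`|h y - f x| ^+ 2)%:E <= sup_err h f A x.
  by move=> Ay; apply: ereal_sup_ubound; exists y.
apply: (@le_trans _ _ (2%:E * (`|h x' - f x| ^+ 2)%:E + 2%:E * (`|h x - f x| ^+ 2)%:E)).
  rewrite -!EFinM -EFinD lee_fin !real_normK ?num_real //.
  rewrite -(sqrrN (h x - f x)) (_ : h x' - h x = h x' - f x + - (h x - f x))%R.
    exact: sqrrD_le.
  by ring.
rewrite (_ : 4%:E = 2%:E + 2%:E); last by rewrite -EFinD -natrD.
by rewrite ge0_muleDl //; apply: leeD; apply: lee_wpmul2l => //; exact: err_ub.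
Qed.

Lemma dev_bias_le_sup_err : A x x ->
  maxe (sup_dev h A x) 0 + ((h x - f x) ^+ 2)%:E <= 5%:E * maxe (sup_err h f A x) 0.
Proof.
move=> Axx.
have bias_le : ((h x - f x) ^+ 2)%:E <= sup_err h f A x.
  by apply: ereal_sup_ubound; exists x => //; rewrite real_normK ?num_real.
have err0 : 0 <= sup_err h f A x by apply: le_trans bias_le; rewrite lee_fin sqr_ge0.
rewrite (max_idPl err0) (_ : 5%:E = 4%:E + 1); last by rewrite -EFinD -natr1.
rewrite ge0_muleDl // mul1e; apply: leeD => //.
by rewrite ge_max sup_dev_le_err // mule_ge0.
Qed.
End sup_bounds.

Section square_integrable.
Local Open Scope ereal_scope.
Context {R : realType} {d : measure_display} {T : measurableType d}.
Variables (mu : {measure set T -> \bar R}) (a b : T -> R).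
Hypotheses (ma : measurable_fun setT a) (mb : measurable_fun setT b).
Hypotheses (ia : mu.-integrable setT (fun t => (a t ^+ 2)%:E))
           (ib : mu.-integrable setT (fun t => (b t ^+ 2)%:E)).

Let integrable_sum_sq :
  mu.-integrable setT (fun t => (2 * a t ^+ 2 + 2 * b t ^+ 2)%:E).
Proof.
apply: (eq_integrable measurableT (fun t => 2%:E * (a t ^+ 2)%:E + 2%:E * (b t ^+ 2)%:E)).
  by [].
by apply: integrableD => //; exact: integrableZl.
Qed.

Let sum_sq_ge0 t : (0 <= 2 * a t ^+ 2 + 2 * b t ^+ 2)%R.
Proof. by rewrite addr_ge0 // mulr_ge0 // sqr_ge0. Qed.

Lemma integrable_sqrB : mu.-integrable setT (fun t => ((a t - b t) ^+ 2)%:E).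
Proof.
apply: le_integrable integrable_sum_sq => //.
  by apply/measurable_EFinP/measurable_funX; exact: measurable_funB.
move=> t _; rewrite !abse_EFin lee_fin !ger0_norm ?sqr_ge0 //.
by rewrite -(sqrrN (b t)) sqrrD_le.
Qed.

Lemma integrableM_sqr : mu.-integrable setT (fun t => (a t * b t)%:E).
Proof.
apply: le_integrable integrable_sum_sq => //.
  by apply/measurable_EFinP; exact: measurable_funM.
move=> t _; rewrite !abse_EFin lee_fin [leRHS]ger0_norm // normrM.
have := sqr_ge0 (`|a t| - `|b t|)%R; rewrite sqrrB !real_normK ?num_real //.
by move: `|a t|%R `|b t|%R => x y; nra.
Qed.
End square_integrable.

Lemma ge0_integrable_lty {R : realType} {d : measure_display} {T : measurableType d}
  (mu : {measure set T -> \bar R}) (g : T -> \bar R) :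
  measurable_fun setT g -> (forall x, (0 <= g x)%E) -> (\int[mu]_x g x < +oo)%E ->
  mu.-integrable setT g.
Proof.
move=> mg g0 gfin; apply/integrableP; split => //.
by under eq_integral => x _ do rewrite gee0_abs //.
Qed.

(* [m + b + d] is the TRADES risk split as bias + Bayes risk + deviation. *)
Lemma excess_bounds {R : realType} (m b d e : \bar R) :
  m \is a fin_num -> b \is a fin_num -> d \is a fin_num ->
  (e <= 2%:E * d + 2%:E * m -> d + m <= 5%:E * e ->
  (m + b + d - b) * (5^-1)%:E <= e /\ e <= 2%:E * (m + b + d - b))%E.
Proof.
move: m b d => [m| |] [b| |] [d| |] // _ _ _; case: e => [e| |].
- by do 3 rewrite -?EFinM -?EFinD -?EFinN; rewrite !lee_fin => ? ?; split; lra.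
- by rewrite -!EFinM -!EFinD leey leye_eq.
- by rewrite gt0_muleNy ?lte_fin // -EFinD leeNy_eq.
Qed.

Section trades.
Local Open Scope ereal_scope.
Context {R : realType} {dS dT dV : measure_display} {S : measurableType dS}
  {T : measurableType dT} {V : measurableType dV}.
Variables (Q : probability S R) (P : probability T R) (X : T -> V) (Y : T -> R)
  (f : V -> R) (h : S -> V -> R) (A : V -> set V).
Hypotheses (mX : measurable_fun setT X) (mY : measurable_fun setT Y)
  (freg : regression_function P X Y f)
  (mh : measurable_fun setT (fun p : S * V => h p.1 p.2))
  (iY2 : P.-integrable setT (fun t => (Y t ^+ 2)%:E))
  (aeA : {ae P, forall t, A (X t) (X t)})
  (mdev : measurable_fun setT (fun p : S * T => sup_dev (h p.1) A (X p.2)))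
  (merr : measurable_fun setT (fun p : S * T => sup_err (h p.1) f A (X p.2))).

Local Notation hX p := (h p.1 (X p.2)).
Local Notation fX p := (f (X p.2)).
(* A(x) may be empty, making the suprema -oo; since x is in A(x) almost surely,
   clipping them at 0 only makes the integrands nonnegative. *)
Local Notation dev p := (maxe (sup_dev (h p.1) A (X p.2)) 0).
Local Notation err p := (maxe (sup_err (h p.1) f A (X p.2)) 0).

Let mf : measurable_fun setT f. Proof. by case: freg. Qed.

Let measurable_hX : measurable_fun setT (fun p : S * T => hX p).
Proof.
apply: (measurableT_comp (f := fun p : S * V => h p.1 p.2)
  (g := fun p : S * T => (p.1, X p.2))) => //.
by apply: measurable_fun_pair => //; exact: measurableT_comp.
Qed.

Let measurable_fX : measurable_fun setT (fun p : S * T => fX p).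
Proof. by apply: measurableT_comp mf _; exact: measurableT_comp. Qed.

Let measurable_loss : measurable_fun setT (fun p : S * T => hX p - Y p.2)%R.
Proof. by apply: measurable_funB => //; exact: measurableT_comp. Qed.

Let measurable_bias : measurable_fun setT (fun p : S * T => hX p - fX p)%R.
Proof. exact: measurable_funB. Qed.

Let measurable_bayes : measurable_fun setT (fun p : S * T => fX p - Y p.2)%R.
Proof. by apply: measurable_funB => //; exact: measurableT_comp. Qed.

Let measurable_sqr (a : S * T -> R) :
  measurable_fun setT a -> measurable_fun setT (fun p => (a p ^+ 2)%:E).
Proof. by move=> ma; apply/measurable_EFinP/measurable_funX. Qed.

Let ae_A : {ae Q \x P, forall p : S * T, A (X p.2) (X p.2)}.
Proof. exact: (ae_prod_snd Q aeA). Qed.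

Let dev_ge0 p : 0 <= dev p. Proof. by rewrite le_max lexx orbT. Qed.
Let err_ge0 p : 0 <= err p. Proof. by rewrite le_max lexx orbT. Qed.

Let measurable_dev : measurable_fun setT (fun p : S * T => dev p).
Proof. exact/measurable_maxe/measurable_cst. Qed.
Let measurable_err : measurable_fun setT (fun p : S * T => err p).
Proof. exact/measurable_maxe/measurable_cst. Qed.

Lemma integrable_bayes_risk :
  (Q \x P).-integrable setT (fun p => ((fX p - Y p.2) ^+ 2)%:E).
Proof.
have mY2 : measurable_fun setT (fun p : S * T => Y p.2) by exact: measurableT_comp.
exact: (integrable_sqrB measurable_fX mY2
  (integrable_prod_snd Q (integrable_regression_sq mX freg iY2))
  (integrable_prod_snd Q iY2)).
Qed.

Lemma bayes_risk_prodE : \int[P]_t (`|f (X t) - Y t| ^+ 2)%:E =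
  \int[Q \x P]_p ((fX p - Y p.2) ^+ 2)%:E.
Proof.
rewrite (@integral_prod_snd _ _ _ _ _ Q P (fun t => ((f (X t) - Y t) ^+ 2)%:E)).
- by apply: eq_integral => t _; rewrite real_normK // num_real.
- apply/measurable_EFinP/measurable_funX/measurable_funB => //.
  exact: measurableT_comp.
- by move=> t; rewrite lee_fin sqr_ge0.
Qed.

Lemma cross_term_eq0 :
  (Q \x P).-integrable setT (fun p => ((hX p - fX p) * (fX p - Y p.2))%:E) ->
  \int[Q \x P]_p ((hX p - fX p) * (fX p - Y p.2))%:E = 0.
Proof.
move=> icross; rewrite -(integral12_prod_meas1 icross).
rewrite (ae_eq_integral (cst 0)) //; first by rewrite integral0.
  exact: measurable_fubini_F icross.
apply: filterS (ae_integrable1 icross) => s ihs _; rewrite /fubini_F /cst /=.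
have mhs : measurable_fun setT (fun v => f v - h s v)%R.
  apply: measurable_funB => //.
  apply: (measurableT_comp (f := fun p : S * V => h p.1 p.2)
    (g := fun v => (s, v))) => //.
  exact: measurable_fun_pair.
transitivity (\int[P]_t (((f (X t) - h s (X t)) * (Y t - f (X t)))%R)%:E).
  by apply: eq_integral => t _; congr EFin; ring.
apply: (integral_compM_residual mX freg mhs).
by apply: (eq_integrable measurableT _ _ _ ihs) => t _ /=; congr EFin; ring.
Qed.

Section finite_trades.
Hypothesis sq_fin : \int[Q \x P]_p ((hX p - Y p.2) ^+ 2)%:E < +oo.

Let integrable_sq_loss : (Q \x P).-integrable setT (fun p => ((hX p - Y p.2) ^+ 2)%:E).
Proof.
apply: ge0_integrable_lty => //; first exact: measurable_sqr.
by move=> p; rewrite lee_fin sqr_ge0.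
Qed.

Lemma integrable_bias : (Q \x P).-integrable setT (fun p => ((hX p - fX p) ^+ 2)%:E).
Proof.
have := integrable_sqrB measurable_loss measurable_bayes integrable_sq_loss
  integrable_bayes_risk.
by apply: eq_integrable => // p _; congr EFin; ring.
Qed.

Lemma sq_risk_decomposition : \int[Q \x P]_p ((hX p - Y p.2) ^+ 2)%:E =
  \int[Q \x P]_p ((hX p - fX p) ^+ 2)%:E + \int[Q \x P]_p ((fX p - Y p.2) ^+ 2)%:E.
Proof.
have ibias := integrable_bias; have ibayes := integrable_bayes_risk.
have icross := integrableM_sqr measurable_bias measurable_bayes ibias ibayes.
have i2cross := integrableZl measurableT 2 icross.
transitivity (\int[Q \x P]_p (((hX p - fX p) ^+ 2)%:E +
   (2%:E * ((hX p - fX p) * (fX p - Y p.2))%:E + ((fX p - Y p.2) ^+ 2)%:E))).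
  by apply: eq_integral => p _; rewrite -EFinM -!EFinD; congr EFin; ring.
rewrite integralD //; last exact: integrableD.
by rewrite integralD // integralZl // cross_term_eq0 // mule0 add0e.
Qed.
End finite_trades.

Lemma trades_integralE :
  \int[Q \x P]_p (((hX p - Y p.2) ^+ 2)%:E + sup_dev (h p.1) A (X p.2)) =
  \int[Q \x P]_p ((hX p - Y p.2) ^+ 2)%:E + \int[Q \x P]_p dev p.
Proof.
have mloss2 := measurable_sqr measurable_loss.
have loss_ge0 p : 0 <= ((hX p - Y p.2) ^+ 2)%:E by rewrite lee_fin sqr_ge0.
rewrite -ge0_integralD //.
apply: ae_eq_integral => //; try by apply: emeasurable_funD => //; exact: measurable_sqr.
apply: filterS ae_A => p Axx _; congr (_ + _); apply/esym/max_idPl.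
by apply: ereal_sup_ubound; exists (X p.2); rewrite ?subrr ?expr0n.
Qed.

Lemma risk_integralE :
  \int[Q \x P]_p sup_err (h p.1) f A (X p.2) = \int[Q \x P]_p err p.
Proof.
apply: ae_eq_integral => //; apply: filterS ae_A => p Axx _; apply/esym/max_idPl.
apply: (le_trans (y := (`|hX p - fX p| ^+ 2)%:E)); first by rewrite lee_fin sqr_ge0.
by apply: ereal_sup_ubound; exists (X p.2).
Qed.

Lemma integral_err_le : \int[Q \x P]_p err p <=
  2%:E * \int[Q \x P]_p dev p + 2%:E * \int[Q \x P]_p ((hX p - fX p) ^+ 2)%:E.
Proof.
have mbias := measurable_sqr measurable_bias.
have bias_ge0 p : 0 <= ((hX p - fX p) ^+ 2)%:E by rewrite lee_fin sqr_ge0.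
apply: (@le_trans _ _
  (\int[Q \x P]_p (2%:E * dev p + 2%:E * ((hX p - fX p) ^+ 2)%:E))).
  apply: ge0_le_integral => //; last by move=> p _; exact: sup_err_le_dev_bias.
  by apply: emeasurable_funD; exact: measurable_funeM.
rewrite ge0_integralD //; first by rewrite !ge0_integralZl.
all: by [move=> p _; exact: mule_ge0 | exact: measurable_funeM].
Qed.

Lemma integral_dev_bias_le : \int[Q \x P]_p dev p +
  \int[Q \x P]_p ((hX p - fX p) ^+ 2)%:E <= 5%:E * \int[Q \x P]_p err p.
Proof.
have mbias := measurable_sqr measurable_bias.
have bias_ge0 p : 0 <= ((hX p - fX p) ^+ 2)%:E by rewrite lee_fin sqr_ge0.
rewrite -ge0_integralD // -ge0_integralZl //.
apply: ae_ge0_le_integral => //.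
- by move=> p _; exact: adde_ge0.
- exact: emeasurable_funD.
- by move=> p _; exact: mule_ge0.
- exact: measurable_funeM.
by apply: filterS ae_A => p Axx _; exact: dev_bias_le_sup_err.
Qed.

Lemma trades_bounds :
  let TRADES := \int[Q \x P]_p
    (((hX p - Y p.2) ^+ 2)%:E + sup_dev (h p.1) A (X p.2)) in
  let RA2 := \int[Q \x P]_p sup_err (h p.1) f A (X p.2) in
  let Bayes := \int[P]_t (`|f (X t) - Y t| ^+ 2)%:E in
  TRADES < +oo ->
  (TRADES - Bayes) * (5^-1)%:E <= RA2 /\ RA2 <= 2%:E * (TRADES - Bayes).
Proof.
move=> TRADES RA2 Bayes; rewrite {}/TRADES {}/RA2 {}/Bayes trades_integralE.
move=> trades_fin.
have loss_fin : \int[Q \x P]_p ((hX p - Y p.2) ^+ 2)%:E < +oo.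
  by apply: le_lt_trans trades_fin; apply: leeDl; exact: integral_ge0.
have dev_fin : \int[Q \x P]_p dev p < +oo.
  apply: le_lt_trans trades_fin; apply: leeDr; apply: integral_ge0 => p _.
  by rewrite lee_fin sqr_ge0.
rewrite (sq_risk_decomposition loss_fin) bayes_risk_prodE risk_integralE.
apply: excess_bounds integral_err_le integral_dev_bias_le.
- exact: integrable_fin_num (integrable_bias loss_fin).
- exact: integrable_fin_num integrable_bayes_risk.
- exact: integrable_fin_num (ge0_integrable_lty measurable_dev dev_ge0 dev_fin).
Qed.
End trades.


Theorem mainTheorem13 (R : realType) (d n : nat)
    (dT : measure_display) (T : measurableType dT) (P : probability T R)
    (dS : measure_display) (S : measurableType dS) (Q : probability S R)
    (X : T -> d.-tuple R) (Y : T -> R)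
    (Z : S -> n.-tuple (d.-tuple R * R)%type)
    (f : d.-tuple R -> R)
    (g : n.-tuple (d.-tuple R * R)%type -> d.-tuple R -> R)
    (A : d.-tuple R -> set (d.-tuple R)) :
  measurable_fun setT X -> measurable_fun setT Y ->
  iid_sample_of P X Y Q Z ->
  regression_function P X Y f ->
  measurable_fun setT
    (fun zx : (n.-tuple (d.-tuple R * R)%type * d.-tuple R)%type => g zx.1 zx.2) ->
  (forall x, measurable (A x)) ->
  {ae P, forall t, A (X t) (X t)} ->
  P.-integrable setT (fun t => (Y t ^+ 2)%:E) ->
  measurable_fun setT (fun p : (S * T)%type => (sup_dev (g (Z p.1)) A (X p.2) : \bar R)) ->
  measurable_fun setT (fun p : (S * T)%type => (sup_err (g (Z p.1)) f A (X p.2) : \bar R)) ->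
  let TRADES := (\int[Q \x P]_p
      (((g (Z p.1) (X p.2) - Y p.2) ^+ 2)%:E + sup_dev (g (Z p.1)) A (X p.2)))%E in
  let RA2 := (\int[Q \x P]_p sup_err (g (Z p.1)) f A (X p.2))%E in
  let Bayes := (\int[P]_t ((`|f (X t) - Y t| ^+ 2)%:E))%E in
  (TRADES < +oo)%E -> (RA2 < +oo)%E ->
  ((TRADES - Bayes) * ((5 : R)^-1)%:E <= RA2)%E /\
  (RA2 <= 2%:E * (TRADES - Bayes))%E.
Proof.
move=> mX mY [mZ _] freg mg _ aeA iY2 mdev merr TRADES RA2 Bayes trades_fin _.
have mh : measurable_fun setT (fun p : S * d.-tuple R => g (Z p.1) p.2).
  apply: (measurableT_comp mg (g := fun p : S * d.-tuple R => (Z p.1, p.2))).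
  by apply: measurable_fun_pair => //; exact: measurableT_comp.
exact: (trades_bounds (Q := Q) (h := g \o Z) mX mY freg mh iY2 aeA mdev merr trades_fin).
Qed.
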